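(* Let $h>0$, $\beta>0$, $k\in\mathbb{N}$, $f(x)=hx^k$, and $\mathcal{B}(\alpha)=f(\alpha)+\sqrt2\beta\sqrt{1-\alpha^2}$ for $\alpha\in[-1,1]$. When $k=1$, for all $\beta>0$, $\sup_{\alpha\in[-1,1]}\mathcal{B}(\alpha)=\sqrt{h^2+2\beta^2}$ and the unique local and global maximizer of $\mathcal{B}$ is $\alpha=\frac{h}{\sqrt{h^2+2\beta^2}}$. When $k=2$ and $\beta\ge\beta_c(2,h)$, the unique local and global maximizer of $\mathcal{B}$ is $\alpha=0$; when $k=2$ and $\beta<\beta_c(2,h)$, $\sup_{\alpha\in[-1,1]}\mathcal{B}(\alpha)=h+\frac{\beta^2}{2h}$ and the unique local and global maximizers are $\alpha=\pm\sqrt{1-\frac{\beta^2}{2h^2}}$. When $k\ge3$ and $\beta\ge\tilde\beta_c(k,h)$, the unique local and global maximizer of $\mathcal{B}$ is $\alpha=0$. When $k\ge3$ and $\beta<\tilde\beta_c(k,h)$, let $\hat\alpha$ be the largest solution of $$\alpha^{2(k-2)}(1-\alpha^2)=2\left(\frac{\beta}{hk}\right)^2,$$ which is the unique solution of this equation in $\big(\sqrt{\tfrac{k-2}{k-1}},1\big)$. Then $\alpha=0$ and $\alpha=\hat\alpha$ are the only local maximizers of $\mathcal{B}$ in $[0,1]$; if $\beta>\beta_c(k,h)$ the global maximizer in $[0,1]$ is $\alpha=0$, if $\beta=\beta_c(k,h)$ both $0$ and $\hat\alpha$ are global maximizers, and if $\beta<\beta_c(k,h)$ the global maximizer in $[0,1]$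 is $\hat\alpha$. When $k\ge4$ is even, $-\hat\alpha$ is also a local (resp. global) maximizer whenever $\hat\alpha$ is, and it is the unique such one in $[-1,0)$; when $k\ge3$ is odd, $\mathcal{B}$ has no local maximizers in $[-1,0)$.
   Context: Critical values: $\beta_c(1,h)=\infty$, $\beta_c(2,h)=\sqrt2h$, and for $k\ge3$, $\beta_c(k,h)=\frac{h}{\sqrt2}\frac{k-1}{k-2}\left(1-\frac{1}{(k-1)^2}\right)^{k/2}$; for $k\ge3$, $\tilde\beta_c(k,h)=\frac{hk}{\sqrt2}\frac{(k-2)^{(k-2)/2}}{(k-1)^{(k-1)/2}}$ (which exceeds $\beta_c(k,h)$). *)

From Stdlib Require Import Reals.
Open Scope R_scope.

Definition Bfun (h beta : R) (k : nat) (a : R) : R :=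
  h * a ^ k + sqrt 2 * beta * sqrt (1 - a ^ 2).

Definition inI (a : R) : Prop := -1 <= a <= 1.

Definition is_global_max (f : R -> R) (a : R) : Prop :=
  inI a /\ forall y, inI y -> f y <= f a.

Definition is_local_max (f : R -> R) (a : R) : Prop :=
  inI a /\ exists eps, 0 < eps /\
    forall y, inI y -> Rabs (y - a) < eps -> f y <= f a.

Definition sup_on_I (f : R -> R) (s : R) : Prop :=
  is_lub (fun v => exists a, inI a /\ v = f a) s.

Definition beta_c2 (h : R) : R := sqrt 2 * h.

Definition beta_c (k : nat) (h : R) : R :=
  h / sqrt 2 * ((INR k - 1) / (INR k - 2)) *
  Rpower (1 - 1 / (INR k - 1) ^ 2) (INR k / 2).

Definition beta_tc (k : nat) (h : R) : R :=
  h * INR k / sqrt 2 *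
  (Rpower (INR k - 2) ((INR k - 2) / 2) / Rpower (INR k - 1) ((INR k - 1) / 2)).

Definition crit_eq (h beta : R) (k : nat) (a : R) : Prop :=
  a ^ (2 * (k - 2)) * (1 - a ^ 2) = 2 * (beta / (h * INR k)) ^ 2.

From Stdlib Require Import Reals Lra Lia.
From Coquelicot Require Import Coquelicot.
Open Scope R_scope.

(* For k = m + 2 and 0 < x < 1, B'(x) is a positive multiple of P(x^2) - c, where
   P(s) = s^m (1 - s) and c = 2 (beta/(h k))^2 is the right-hand side of the critical
   equation. P increases on [0, m/(m+1)] and decreases on [m/(m+1), 1], and its maximum is
   the value of c at beta = tilde beta_c. Hence for beta >= tilde beta_c, B decreases on
   [0,1]; otherwise P = c has two roots s1 < m/(m+1) < s2 and B decreases, increases and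
   decreases again, with turning points sqrt s1 and ahat = sqrt s2. At ahat the critical
   equation says h k ahat^m u = sqrt 2 beta with u = sqrt (1 - ahat^2), which turns
   B(ahat) - B(0) into h ahat^m (1 - u) (1 - (k - 1) u): the comparison of the two
   candidates changes sign at ahat^2 = 1 - 1/(k-1)^2, i.e. at beta = beta_c.
   Negative arguments reduce to nonnegative ones since B(y) <= B(|y|), with equality for
   even k, while B increases on [-1,0] for odd k. The case k = 2 is the same analysis with
   P(s) = 1 - s, and for k = 1 the derivative is a positive multiple of
   h^2 - (h^2 + 2 beta^2) x^2 on (0,1). *)

Lemma lt_iff_sq_lt (a b : R) : 0 <= a -> 0 <= b -> (a < b <-> a ^ 2 < b ^ 2).
Proof. intros Ha Hb. split; intros; nra. Qed.

Lemma sqrt_lt_one (x : R) : 0 <= x < 1 -> sqrt x < 1.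
Proof. intros Hx. rewrite <- sqrt_1. apply sqrt_lt_1_alt. exact Hx. Qed.

(** * Monotonicity and extrema on [-1, 1] *)

Definition strict_incr_on (f : R -> R) (p q : R) : Prop :=
  forall x y, p <= x -> x < y -> y <= q -> f x < f y.

Definition strict_decr_on (f : R -> R) (p q : R) : Prop :=
  forall x y, p <= x -> x < y -> y <= q -> f y < f x.

(* Differentiability is only required inside: B is not differentiable at -1 and 1. *)
Lemma MVT_open (f df : R -> R) (p q : R) :
  (forall x, p < x < q -> is_derive f x (df x)) ->
  (forall x, p <= x <= q -> continuity_pt f x) ->
  forall x y, p <= x -> x < y -> y <= q ->
  exists c, x < c < y /\ f y - f x = df c * (y - x).
Proof.
  intros Hd Hc x y Hx Hxy Hy.
  assert (Hd' : forall c, x < c < y -> derivable_pt_lim f c (df c)).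
  { intros c Hc'. apply is_derive_Reals, Hd. lra. }
  destruct (MVT f id x y (fun c P => exist _ (df c) (Hd' c P))
              (fun c _ => derivable_pt_id c) Hxy) as [c [P Heq]].
  - intros c Hc'. apply Hc. lra.
  - intros c _. apply derivable_continuous_pt, derivable_pt_id.
  - exists c. split; [exact P|]. cbn in Heq. rewrite derive_pt_id in Heq.
    unfold id in Heq. lra.
Qed.

Lemma strict_incr_on_derive (f df : R -> R) (p q : R) :
  (forall x, p < x < q -> is_derive f x (df x)) ->
  (forall x, p <= x <= q -> continuity_pt f x) ->
  (forall x, p < x < q -> 0 < df x) -> strict_incr_on f p q.
Proof.
  intros Hd Hc Hpos x y Hx Hxy Hy.
  destruct (MVT_open f df p q Hd Hc x y Hx Hxy Hy) as [c [Hc' E]].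
  specialize (Hpos c ltac:(lra)). nra.
Qed.

Lemma strict_decr_on_derive (f df : R -> R) (p q : R) :
  (forall x, p < x < q -> is_derive f x (df x)) ->
  (forall x, p <= x <= q -> continuity_pt f x) ->
  (forall x, p < x < q -> df x < 0) -> strict_decr_on f p q.
Proof.
  intros Hd Hc Hneg x y Hx Hxy Hy.
  destruct (MVT_open f df p q Hd Hc x y Hx Hxy Hy) as [c [Hc' E]].
  specialize (Hneg c ltac:(lra)). nra.
Qed.

Lemma strict_decr_on_join (f : R -> R) (p m q : R) :
  strict_decr_on f p m -> strict_decr_on f m q -> strict_decr_on f p q.
Proof.
  intros H1 H2 x y Hx Hxy Hy.
  destruct (Rle_lt_dec y m); [apply H1; lra|].
  destruct (Rle_lt_dec m x); [apply H2; lra|].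
  apply Rlt_trans with (f m); [apply H2 | apply H1]; lra.
Qed.

Lemma strict_decr_on_lt_iff (f : R -> R) (p q x y : R) :
  strict_decr_on f p q -> p <= x <= q -> p <= y <= q -> (f x < f y <-> y < x).
Proof.
  intros Hf Hx Hy. split; intros H.
  - destruct (Rtotal_order x y) as [Hlt | [-> | Hgt]]; [| lra | exact Hgt].
    specialize (Hf x y ltac:(lra) Hlt ltac:(lra)). lra.
  - apply Hf; lra.
Qed.

Lemma strict_decr_on_inj (f : R -> R) (p q x y : R) :
  strict_decr_on f p q -> p <= x <= q -> p <= y <= q -> f x = f y -> x = y.
Proof.
  intros Hf Hx Hy E.
  destruct (Rtotal_order x y) as [Hlt | [Heq | Hgt]]; [| exact Heq |].
  - specialize (Hf x y ltac:(lra) Hlt ltac:(lra)). lra.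
  - specialize (Hf y x ltac:(lra) Hgt ltac:(lra)). lra.
Qed.

Lemma global_max_local_max (f : R -> R) (a : R) :
  is_global_max f a -> is_local_max f a.
Proof. intros [Ha Hmax]. split; [exact Ha|]. exists 1. split; [lra|]. auto. Qed.

Lemma sup_on_I_global_max (f : R -> R) (a : R) :
  is_global_max f a -> sup_on_I f (f a).
Proof.
  intros [Ha Hmax]. split.
  - intros v [y [Hy ->]]. auto.
  - intros b Hb. apply Hb. exists a. auto.
Qed.

Lemma local_max_opp (f : R -> R) (a : R) :
  (forall y, f (- y) = f y) -> is_local_max f a -> is_local_max f (- a).
Proof.
  intros Heven [Ha [eps [Heps Hmax]]]. split; [unfold inI in *; lra|].
  exists eps. split; [exact Heps|]. intros y Hy Hya.
  rewrite <- (Heven y), <- (Heven (- a)), Ropp_involutive.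
  apply Hmax; [unfold inI in *; lra|].
  now replace (- y - a) with (- (y - - a)) by ring; rewrite Rabs_Ropp.
Qed.

Lemma global_max_opp (f : R -> R) (a : R) :
  (forall y, f (- y) = f y) -> is_global_max f a -> is_global_max f (- a).
Proof.
  intros Heven [Ha Hmax]. split; [unfold inI in *; lra|].
  intros y Hy. rewrite Heven. auto.
Qed.

Lemma not_local_max_incr_right (f : R -> R) (p q a : R) :
  strict_incr_on f p q -> p <= a < q -> q <= 1 -> ~ is_local_max f a.
Proof.
  intros Hf Ha Hq [[Ha1 _] [eps [Heps Hmax]]].
  set (y := a + Rmin eps (q - a) / 2).
  assert (0 < Rmin eps (q - a)) by (apply Rmin_pos; lra).
  pose proof (Rmin_l eps (q - a)). pose proof (Rmin_r eps (q - a)).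
  assert (f y <= f a).
  { apply Hmax; unfold inI, y; [lra|]. rewrite Rabs_right; lra. }
  assert (f a < f y) by (apply Hf; unfold y; lra).
  lra.
Qed.

Lemma not_local_max_decr_left (f : R -> R) (p q a : R) :
  strict_decr_on f p q -> -1 <= p -> p < a <= q -> ~ is_local_max f a.
Proof.
  intros Hf Hp Ha [[_ Ha2] [eps [Heps Hmax]]].
  set (y := a - Rmin eps (a - p) / 2).
  assert (0 < Rmin eps (a - p)) by (apply Rmin_pos; lra).
  pose proof (Rmin_l eps (a - p)). pose proof (Rmin_r eps (a - p)).
  assert (f y <= f a).
  { apply Hmax; unfold inI, y; [lra|]. rewrite Rabs_left; lra. }
  assert (f a < f y) by (apply Hf; unfold y; lra).
  lra.
Qed.

Lemma local_max_peak (f : R -> R) (p a : R) :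
  inI a -> p < a -> strict_incr_on f p a -> strict_decr_on f a 1 ->
  is_local_max f a.
Proof.
  intros Ha Hpa Hinc Hdec. split; [exact Ha|].
  exists (a - p). split; [lra|]. intros y [_ Hy1] Hya.
  destruct (Rtotal_order y a) as [Hlt | [-> | Hgt]]; [| lra |].
  - rewrite Rabs_left in Hya by lra. left. apply Hinc; lra.
  - left. apply Hdec; lra.
Qed.

Lemma local_max_0_abs (f : R -> R) (q : R) :
  (forall y, inI y -> f y <= f (Rabs y)) -> 0 < q -> strict_decr_on f 0 q ->
  is_local_max f 0.
Proof.
  intros Habs Hq Hdec. split; [unfold inI; lra|].
  exists q. split; [exact Hq|]. intros y Hy Hy0. rewrite Rminus_0_r in Hy0.
  apply Rle_trans with (f (Rabs y)); [auto|].
  destruct (Req_dec (Rabs y) 0) as [-> | Hne]; [lra|].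
  left. apply Hdec; [lra | | lra]. pose proof (Rabs_pos y). lra.
Qed.

Lemma global_max_two_candidates (f : R -> R) (p q a : R) :
  inI p -> inI q -> (forall y, inI y -> f y <= Rmax (f p) (f q)) ->
  (a <> p -> a <> q -> f a < Rmax (f p) (f q)) ->
  (is_global_max f a <-> (a = p /\ f q <= f p) \/ (a = q /\ f p <= f q)).
Proof.
  intros Hp Hq Hle Hlt. split.
  - intros [Ha Hmax]. pose proof (Hmax p Hp). pose proof (Hmax q Hq).
    destruct (Req_dec a p) as [-> | Hap]; [now left|].
    destruct (Req_dec a q) as [-> | Haq]; [now right|].
    pose proof (Rmax_lub _ _ _ H H0). specialize (Hlt Hap Haq). lra.
  - intros [[-> Hqp] | [-> Hpq]]; split; auto; intros y Hy.
    + rewrite <- (Rmax_left (f p) (f q)); auto.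
    + rewrite <- (Rmax_right (f p) (f q)); auto.
Qed.

Lemma mirror_classification (P : R -> Prop) (m : R) :
  (forall a, P a -> P (- a)) -> (forall a, P a -> inI a) -> 0 <= m <= 1 ->
  (forall a, 0 <= a <= 1 -> (P a <-> a = m)) ->
  forall a, P a <-> a = m \/ a = - m.
Proof.
  intros Hopp HI Hm Hhalf a. split.
  - intros Ha. destruct (HI a Ha) as [Ha1 Ha2].
    destruct (Rle_lt_dec 0 a); [left; apply Hhalf; auto; lra|].
    right. rewrite <- (Ropp_involutive a). f_equal. apply Hhalf; [lra|]. auto.
  - assert (P m) by (apply Hhalf; auto).
    intros [-> | ->]; auto.
Qed.

Section NonnegUnimodal.

Variables (f : R -> R) (m : R).
Hypotheses (Habs : forall y, inI y -> f y <= f (Rabs y)) (Hm : 0 <= m < 1)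
  (Hinc : strict_incr_on f 0 m) (Hdec : strict_decr_on f m 1).

Lemma lt_at_peak a : 0 <= a <= 1 -> a <> m -> f a < f m.
Proof.
  intros Ha Hne. destruct (Rtotal_order a m) as [Hlt | [-> | Hgt]]; [| easy |].
  - apply Hinc; lra.
  - apply Hdec; lra.
Qed.

Lemma global_max_peak : is_global_max f m.
Proof.
  split; [unfold inI; lra|]. intros y Hy. apply Rle_trans with (f (Rabs y)); auto.
  destruct (Req_dec (Rabs y) m) as [-> | Hne]; [lra|].
  left. apply lt_at_peak; [|exact Hne]. unfold inI in Hy. apply Rabs_le in Hy.
  pose proof (Rabs_pos y). lra.
Qed.

Lemma nonneg_unimodal_classification a : 0 <= a <= 1 ->
  (is_local_max f a <-> a = m) /\ (is_global_max f a <-> a = m).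
Proof.
  intros Ha.
  assert (Hloc : is_local_max f a -> a = m).
  { intros Hl. destruct (Rtotal_order a m) as [Hlt | [Heq | Hgt]]; [| exact Heq |].
    - exfalso. apply (not_local_max_incr_right f 0 m a); auto; lra.
    - exfalso. apply (not_local_max_decr_left f m 1 a); auto; lra. }
  split; split; auto.
  - intros ->. apply global_max_local_max, global_max_peak.
  - intros Hg. apply Hloc, global_max_local_max, Hg.
  - intros ->. apply global_max_peak.
Qed.

End NonnegUnimodal.

Lemma max_classification_incr_neg (f : R -> R) (m : R) :
  (forall y, inI y -> f y <= f (Rabs y)) -> strict_incr_on f (-1) 0 ->
  0 <= m < 1 -> strict_incr_on f 0 m -> strict_decr_on f m 1 ->
  (forall a, is_local_max f a <-> a = m) /\ (forall a, is_global_max f a <-> a = m).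
Proof.
  intros Habs Hneg Hm Hinc Hdec.
  pose proof (nonneg_unimodal_classification f m Habs Hm Hinc Hdec) as Hhalf.
  assert (Hloc : forall a, is_local_max f a -> a = m).
  { intros a Hl. assert (HaI : inI a) by apply Hl. unfold inI in HaI.
    destruct (Rle_lt_dec 0 a) as [Ha | Ha].
    - apply (proj1 (Hhalf a ltac:(lra))), Hl.
    - exfalso. apply (not_local_max_incr_right f (-1) 0 a Hneg); [lra | lra | exact Hl]. }
  split; intros a; split; auto.
  - intros ->. apply (proj1 (Hhalf m ltac:(lra))). reflexivity.
  - intros Hg. apply Hloc, global_max_local_max, Hg.
  - intros ->. apply (proj2 (Hhalf m ltac:(lra))). reflexivity.
Qed.

Lemma max_classification_even (f : R -> R) (m : R) :
  (forall y, f (- y) = f y) -> 0 <= m < 1 -> strict_incr_on f 0 m -> strict_decr_on f m 1 ->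
  (forall a, is_local_max f a <-> a = m \/ a = - m) /\
  (forall a, is_global_max f a <-> a = m \/ a = - m).
Proof.
  intros Heven Hm Hinc Hdec.
  assert (Habs : forall y, inI y -> f y <= f (Rabs y)).
  { intros y _. destruct (Rcase_abs y); [rewrite Rabs_left, Heven | rewrite Rabs_right]; lra. }
  pose proof (nonneg_unimodal_classification f m Habs Hm Hinc Hdec) as Hhalf.
  split; apply mirror_classification; try lra.
  - intros a. apply local_max_opp, Heven.
  - now intros a [].
  - intros a Ha. apply (proj1 (Hhalf a Ha)).
  - intros a. apply global_max_opp, Heven.
  - now intros a [].
  - intros a Ha. apply (proj2 (Hhalf a Ha)).
Qed.

(** * The function B and its derivative *)

Definition dBfun (h beta : R) (k : nat) (x : R) : R :=
  h * INR k * x ^ (k - 1) - sqrt 2 * beta * x / sqrt (1 - x ^ 2).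

Lemma Bfun_derive (h beta : R) (k : nat) (x : R) :
  -1 < x < 1 -> is_derive (Bfun h beta k) x (dBfun h beta k x).
Proof.
  intros Hx. unfold Bfun, dBfun. auto_derive.
  - nra.
  - rewrite Nat.sub_1_r.
    assert (0 < sqrt (1 - x ^ 2)) by (apply sqrt_lt_R0; nra).
    replace (1 + - (x * (x * 1))) with (1 - x ^ 2) by ring. field. lra.
Qed.

Lemma Bfun_continuous (h beta : R) (k : nat) (x : R) : continuity_pt (Bfun h beta k) x.
Proof.
  unfold Bfun.
  apply (continuity_pt_plus (fun x => h * x ^ k) (fun x => sqrt 2 * beta * sqrt (1 - x ^ 2))).
  - apply derivable_continuous_pt. reg.
  - apply (continuity_pt_mult (fun _ => sqrt 2 * beta) (fun x => sqrt (1 - x ^ 2))).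
    + apply continuity_pt_const. now intros a b.
    + apply (continuity_pt_comp (fun x => 1 - x ^ 2) sqrt).
      * apply derivable_continuous_pt. reg.
      * apply continuity_pt_filterlim, continuous_sqrt.
Qed.

Lemma Bfun_strict_incr_on (h beta : R) (k : nat) (p q : R) :
  -1 <= p -> q <= 1 -> (forall x, p < x < q -> 0 < dBfun h beta k x) ->
  strict_incr_on (Bfun h beta k) p q.
Proof.
  intros Hp Hq. apply strict_incr_on_derive.
  - intros x Hx. apply Bfun_derive. lra.
  - intros x _. apply Bfun_continuous.
Qed.

Lemma Bfun_strict_decr_on (h beta : R) (k : nat) (p q : R) :
  -1 <= p -> q <= 1 -> (forall x, p < x < q -> dBfun h beta k x < 0) ->
  strict_decr_on (Bfun h beta k) p q.
Proof.
  intros Hp Hq. apply strict_decr_on_derive.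
  - intros x Hx. apply Bfun_derive. lra.
  - intros x _. apply Bfun_continuous.
Qed.

Lemma Bfun_le_abs (h beta : R) (k : nat) (y : R) :
  0 <= h -> Bfun h beta k y <= Bfun h beta k (Rabs y).
Proof.
  intros hh. unfold Bfun. rewrite pow2_abs, RPow_abs.
  pose proof (Rle_abs (y ^ k)). nra.
Qed.

Lemma Bfun_even (h beta : R) (k : nat) (y : R) :
  Nat.Even k -> Bfun h beta k (- y) = Bfun h beta k y.
Proof.
  intros [j ->]. unfold Bfun. rewrite !pow_mult.
  now replace ((- y) ^ 2) with (y ^ 2) by ring.
Qed.

Lemma Bfun_strict_incr_on_neg_odd (h beta : R) (k : nat) :
  0 <= h -> 0 < beta -> Nat.Odd k -> strict_incr_on (Bfun h beta k) (-1) 0.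
Proof.
  intros hh hb [j Hj]. apply Bfun_strict_incr_on; [lra | lra|].
  intros x Hx. unfold dBfun.
  replace (k - 1)%nat with (2 * j)%nat by lia. rewrite pow_mult.
  assert (0 < sqrt (1 - x ^ 2)) by (apply sqrt_lt_R0; nra).
  assert (0 <= (x ^ 2) ^ j) by (apply pow_le; nra).
  pose proof (pos_INR k). pose proof Rlt_sqrt2_0.
  assert (0 <= h * INR k * (x ^ 2) ^ j) by (apply Rmult_le_pos; [apply Rmult_le_pos|]; lra).
  assert (sqrt 2 * beta * x / sqrt (1 - x ^ 2) < 0).
  { apply Rdiv_neg_pos; [|lra]. assert (0 < sqrt 2 * beta) by nra. nra. }
  lra.
Qed.

(** * The critical polynomial and the thresholds *)

(* Indexed by m = k - 2, so that [crit_eq h beta (m + 2) a] reads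
   [crit_poly m (a ^ 2) = crit_level h beta m]. *)
Definition crit_poly (m : nat) (s : R) : R := s ^ m * (1 - s).

Definition crit_level (h beta : R) (m : nat) : R := 2 * (beta / (h * INR (m + 2))) ^ 2.

Definition crit_peak (m : nat) : R := INR m / (INR m + 1).

(* The value of ahat^2 at which B(ahat) = B(0); it corresponds to beta = beta_c. *)
Definition crit_tie (m : nat) : R := 1 - 1 / (INR m + 1) ^ 2.

Lemma INR_add2 (m : nat) : INR (m + 2) = INR m + 2.
Proof. rewrite plus_INR. simpl. ring. Qed.

Lemma crit_eq_iff (h beta : R) (m : nat) (a : R) :
  crit_eq h beta (m + 2) a <-> crit_poly m (a ^ 2) = crit_level h beta m.
Proof.
  unfold crit_eq, crit_poly, crit_level.
  replace (2 * (m + 2 - 2))%nat with (2 * m)%nat by lia. rewrite pow_mult. tauto.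
Qed.

Lemma crit_poly_derive (m : nat) (s : R) :
  is_derive (crit_poly m) s (INR m * s ^ pred m * (1 - s) - s ^ m).
Proof. unfold crit_poly. auto_derive; auto. ring. Qed.

Lemma crit_poly_derive_scaled (m : nat) (s : R) :
  s * (INR m * s ^ pred m * (1 - s) - s ^ m) = s ^ m * (INR m - (INR m + 1) * s).
Proof. destruct m; simpl; ring. Qed.

Lemma crit_poly_continuous (m : nat) (s : R) : continuity_pt (crit_poly m) s.
Proof. apply derivable_continuous_pt. exists (INR m * s ^ pred m * (1 - s) - s ^ m).
  apply is_derive_Reals, crit_poly_derive. Qed.

Lemma crit_peak_bounds (m : nat) : 0 <= crit_peak m < 1.
Proof.
  pose proof (pos_INR m). unfold crit_peak. split.
  - apply Rdiv_le_0_compat; lra.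
  - rewrite <- Rdiv_lt_1; lra.
Qed.

Lemma crit_poly_strict_incr (m : nat) : strict_incr_on (crit_poly m) 0 (crit_peak m).
Proof.
  pose proof (pos_INR m).
  apply (strict_incr_on_derive _ _ _ _ (fun s _ => crit_poly_derive m s)
           (fun s _ => crit_poly_continuous m s)).
  intros s [Hs Hsp]. unfold crit_peak in Hsp.
  rewrite <- Rlt_div_r in Hsp by lra.
  pose proof (crit_poly_derive_scaled m s). assert (0 < s ^ m) by (apply pow_lt; lra).
  assert (0 < s ^ m * (INR m - (INR m + 1) * s)) by nra.
  nra.
Qed.

Lemma crit_poly_strict_decr (m : nat) : strict_decr_on (crit_poly m) (crit_peak m) 1.
Proof.
  pose proof (pos_INR m). pose proof (crit_peak_bounds m).
  apply (strict_decr_on_derive _ _ _ _ (fun s _ => crit_poly_derive m s)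
           (fun s _ => crit_poly_continuous m s)).
  intros s [Hsp Hs]. assert (0 < s ^ m) by (apply pow_lt; lra).
  unfold crit_peak in Hsp. rewrite Rlt_div_l in Hsp by lra.
  pose proof (crit_poly_derive_scaled m s).
  assert (s ^ m * (INR m - (INR m + 1) * s) < 0) by nra.
  nra.
Qed.

Lemma crit_tie_bounds (m : nat) : (1 <= m)%nat -> crit_peak m < crit_tie m < 1.
Proof.
  intros Hm. apply le_INR in Hm. simpl in Hm. unfold crit_peak, crit_tie.
  assert (0 < 1 / (INR m + 1) ^ 2) by (apply Rdiv_lt_0_compat; [lra | apply pow_lt; lra]).
  split; [|lra].
  replace (INR m / (INR m + 1)) with (1 - 1 / (INR m + 1)) by (field; lra).
  apply Rplus_lt_compat_l, Ropp_lt_contravar.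
  unfold Rdiv. rewrite !Rmult_1_l. apply Rinv_lt_contravar; [apply Rmult_lt_0_compat|]; nra.
Qed.

Lemma crit_level_scale (h beta : R) (m : nat) : 0 < h ->
  crit_level h beta m = 2 / (h * INR (m + 2)) ^ 2 * beta ^ 2.
Proof.
  intros hh. unfold crit_level. rewrite INR_add2. pose proof (pos_INR m). field. lra.
Qed.

Lemma crit_level_pos (h beta : R) (m : nat) : 0 < h -> 0 < beta -> 0 < crit_level h beta m.
Proof.
  intros hh hb. rewrite crit_level_scale by exact hh. rewrite INR_add2. pose proof (pos_INR m).
  apply Rmult_lt_0_compat; [apply Rdiv_lt_0_compat; [lra | apply pow_lt]|]; nra.
Qed.

Lemma crit_level_lt_iff (h b1 b2 : R) (m : nat) : 0 < h -> 0 < b1 -> 0 < b2 ->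
  (crit_level h b1 m < crit_level h b2 m <-> b1 < b2).
Proof.
  intros hh hb1 hb2. rewrite !crit_level_scale by exact hh. rewrite INR_add2.
  pose proof (pos_INR m).
  assert (0 < 2 / (h * (INR m + 2)) ^ 2) by (apply Rdiv_lt_0_compat; [lra | apply pow_lt; nra]).
  split; intros Hlt.
  - apply Rmult_lt_reg_l in Hlt; [nra | lra].
  - apply Rmult_lt_compat_l; [lra | nra].
Qed.

Lemma crit_level_le (h b1 b2 : R) (m : nat) : 0 < h -> 0 < b1 -> b1 <= b2 ->
  crit_level h b1 m <= crit_level h b2 m.
Proof.
  intros hh hb1 [Hlt | <-]; [|lra].
  left. apply crit_level_lt_iff; lra.
Qed.

Lemma crit_poly_peak0 : crit_poly 0 (crit_peak 0) = 1.
Proof. unfold crit_poly, crit_peak. simpl. field. Qed.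

Lemma Rpower_half_sq (x y : R) : Rpower x (y / 2) ^ 2 = Rpower x y.
Proof. simpl. rewrite Rmult_1_r, <- Rpower_plus. f_equal. field. Qed.

Lemma beta_tc_pos (h : R) (m : nat) : 0 < h -> 0 < beta_tc (m + 2) h.
Proof.
  intros hh. unfold beta_tc. rewrite INR_add2. pose proof (pos_INR m).
  pose proof Rlt_sqrt2_0. unfold Rpower. pose proof (exp_pos ((INR m + 2 - 2) / 2 * ln (INR m + 2 - 2))).
  pose proof (exp_pos ((INR m + 2 - 1) / 2 * ln (INR m + 2 - 1))).
  apply Rmult_lt_0_compat; apply Rdiv_lt_0_compat; nra.
Qed.

Lemma crit_level_beta_tc (h : R) (m : nat) : 0 < h -> (1 <= m)%nat ->
  crit_level h (beta_tc (m + 2) h) m = crit_poly m (crit_peak m).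
Proof.
  intros hh Hm. apply le_INR in Hm. simpl in Hm. pose proof Rlt_sqrt2_0 as Hs.
  unfold crit_level, beta_tc, crit_poly, crit_peak. rewrite INR_add2.
  replace (INR m + 2 - 2) with (INR m) by ring.
  replace (INR m + 2 - 1) with (INR (S m)) by (rewrite S_INR; ring).
  assert (0 < INR (S m)) by (rewrite S_INR; lra).
  set (R1 := Rpower (INR m) (INR m / 2)). set (R2 := Rpower (INR (S m)) (INR (S m) / 2)).
  assert (0 < R2) by apply exp_pos.
  replace (2 * (h * (INR m + 2) / sqrt 2 * (R1 / R2) / (h * (INR m + 2))) ^ 2)
    with (2 / sqrt 2 ^ 2 * R1 ^ 2 / R2 ^ 2) by (field; repeat split; lra).
  rewrite pow2_sqrt by lra. unfold R1, R2. rewrite !Rpower_half_sq, !Rpower_pow by lra.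
  rewrite S_INR, <- tech_pow_Rmult. unfold Rdiv. rewrite Rpow_mult_distr, pow_inv.
  field. split; [lra|]. apply pow_nonzero. lra.
Qed.

Lemma beta_c_pos (h : R) (m : nat) : 0 < h -> (1 <= m)%nat -> 0 < beta_c (m + 2) h.
Proof.
  intros hh Hm. apply le_INR in Hm. simpl in Hm. pose proof Rlt_sqrt2_0.
  unfold beta_c. rewrite INR_add2. apply Rmult_lt_0_compat; [|apply exp_pos].
  apply Rmult_lt_0_compat; apply Rdiv_lt_0_compat; lra.
Qed.

Lemma crit_level_beta_c (h : R) (m : nat) : 0 < h -> (1 <= m)%nat ->
  crit_level h (beta_c (m + 2) h) m = crit_poly m (crit_tie m).
Proof.
  intros hh Hm. pose proof (crit_tie_bounds m Hm). pose proof (crit_peak_bounds m).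
  apply le_INR in Hm. simpl in Hm. pose proof Rlt_sqrt2_0.
  unfold crit_level, beta_c. rewrite INR_add2.
  replace (INR m + 2 - 1) with (INR m + 1) by ring. replace (INR m + 2 - 2) with (INR m) by ring.
  fold (crit_tie m).
  replace (2 * (h / sqrt 2 * ((INR m + 1) / INR m) *
             Rpower (crit_tie m) ((INR m + 2) / 2) / (h * (INR m + 2))) ^ 2)
    with (2 / sqrt 2 ^ 2 * ((INR m + 1) / (INR m * (INR m + 2))) ^ 2 *
          Rpower (crit_tie m) ((INR m + 2) / 2) ^ 2) by (field; repeat split; lra).
  rewrite pow2_sqrt, Rpower_half_sq, <- INR_add2, Rpower_pow, pow_add by lra.
  unfold crit_poly, crit_tie. rewrite INR_add2. field. lra.
Qed.

Lemma crit_level_beta_c2 (h : R) : 0 < h -> crit_level h (beta_c2 h) 0 = 1.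
Proof.
  intros hh. unfold crit_level, beta_c2. rewrite INR_add2. simpl INR. pose proof Rlt_sqrt2_0.
  replace (2 * (sqrt 2 * h / (h * (0 + 2))) ^ 2) with (sqrt 2 ^ 2 / 2) by (field; lra).
  rewrite pow2_sqrt by lra. field.
Qed.

Lemma crit_level_sq (h beta : R) (m : nat) :
  0 < h -> crit_level h beta m = (sqrt 2 * beta / (h * INR (m + 2))) ^ 2.
Proof.
  intros hh. unfold crit_level. rewrite INR_add2. pose proof (pos_INR m).
  rewrite <- (pow2_sqrt 2) at 1 by lra. field. lra.
Qed.

Lemma dBfun_crit (h beta : R) (m : nat) (x : R) : 0 < h -> 0 < beta -> 0 < x < 1 ->
  exists w, 0 < w /\
    dBfun h beta (m + 2) x = w * (crit_poly m (x ^ 2) - crit_level h beta m).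
Proof.
  intros hh hb Hx. rewrite crit_level_sq by exact hh.
  assert (Hm2 : 0 < INR (m + 2)) by (rewrite INR_add2; pose proof (pos_INR m); lra).
  assert (Hk : 0 < h * INR (m + 2)) by nra.
  assert (Hxm : 0 < x ^ m) by (apply pow_lt; lra).
  assert (Hb : 0 < sqrt 2 * beta) by (pose proof Rlt_sqrt2_0; nra).
  assert (Hu : 0 < sqrt (1 - x ^ 2)) by (apply sqrt_lt_R0; nra).
  pose proof (pow2_sqrt (1 - x ^ 2) ltac:(nra)) as Hu2.
  unfold dBfun, crit_poly. replace (m + 2 - 1)%nat with (S m) by lia.
  set (u := sqrt (1 - x ^ 2)) in *. rewrite <- Hu2, <- pow_mult, Nat.mul_comm, pow_mult.
  set (A := h * INR (m + 2) * x ^ m * u).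
  assert (0 < A) by (unfold A; apply Rmult_lt_0_compat; [apply Rmult_lt_0_compat|]; lra).
  exists (x * (h * INR (m + 2)) ^ 2 / (u * (A + sqrt 2 * beta))). split.
  - assert (0 < (h * INR (m + 2)) ^ 2) by (apply pow_lt; lra).
    apply Rdiv_lt_0_compat; apply Rmult_lt_0_compat; nra.
  - unfold A. simpl pow. field. unfold A in *. repeat split; lra.
Qed.

Section CritMonotonicity.

Variables (h beta : R) (m : nat).
Hypotheses (hh : 0 < h) (hb : 0 < beta).

Lemma Bfun_strict_incr_on_crit (p q : R) : 0 <= p -> q <= 1 ->
  (forall s, p ^ 2 < s < q ^ 2 -> crit_level h beta m < crit_poly m s) ->
  strict_incr_on (Bfun h beta (m + 2)) p q.
Proof.
  intros Hp Hq Hcrit. apply Bfun_strict_incr_on; [lra | exact Hq|]. intros x Hx.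
  destruct (dBfun_crit h beta m x hh hb ltac:(lra)) as [w [Hw ->]].
  specialize (Hcrit (x ^ 2) ltac:(split; nra)). nra.
Qed.

Lemma Bfun_strict_decr_on_crit (p q : R) : 0 <= p -> q <= 1 ->
  (forall s, p ^ 2 < s < q ^ 2 -> crit_poly m s < crit_level h beta m) ->
  strict_decr_on (Bfun h beta (m + 2)) p q.
Proof.
  intros Hp Hq Hcrit. apply Bfun_strict_decr_on; [lra | exact Hq|]. intros x Hx.
  destruct (dBfun_crit h beta m x hh hb ltac:(lra)) as [w [Hw ->]].
  specialize (Hcrit (x ^ 2) ltac:(split; nra)). nra.
Qed.

End CritMonotonicity.

(** * Classification of the maximizers *)

Lemma Bfun_decreasing_regime (h beta : R) (m : nat) : 0 < h -> 0 < beta ->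
  crit_poly m (crit_peak m) <= crit_level h beta m ->
  (forall a, is_local_max (Bfun h beta (m + 2)) a <-> a = 0) /\
  (forall a, is_global_max (Bfun h beta (m + 2)) a <-> a = 0).
Proof.
  intros hh hb Hc. pose proof (crit_peak_bounds m) as Hpk.
  pose proof (pow2_sqrt (crit_peak m) ltac:(lra)) as Hsq.
  pose proof (sqrt_pos (crit_peak m)). pose proof (sqrt_lt_one (crit_peak m) Hpk).
  (* If the level equals the maximum of [crit_poly m], B' vanishes at [sqrt (crit_peak m)]. *)
  assert (Hdec : strict_decr_on (Bfun h beta (m + 2)) 0 1).
  { apply (strict_decr_on_join _ 0 (sqrt (crit_peak m)) 1);
      apply Bfun_strict_decr_on_crit; try lra; rewrite ?Hsq; intros s Hs.
    - assert (crit_poly m s < crit_poly m (crit_peak m)) by (apply crit_poly_strict_incr; lra). lra.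
    - assert (crit_poly m s < crit_poly m (crit_peak m)) by (apply crit_poly_strict_decr; lra). lra. }
  assert (Hinc0 : strict_incr_on (Bfun h beta (m + 2)) 0 0) by (intros x y; lra).
  destruct (Nat.Even_or_Odd (m + 2)) as [Heven | Hodd].
  - destruct (max_classification_even _ 0 (fun y => Bfun_even h beta _ y Heven)
                ltac:(lra) Hinc0 Hdec) as [Hl Hg].
    rewrite Ropp_0 in Hl, Hg. split; intros a; [rewrite Hl | rewrite Hg]; tauto.
  - apply max_classification_incr_neg; auto; try lra.
    + intros y _. apply Bfun_le_abs. lra.
    + apply Bfun_strict_incr_on_neg_odd; auto. lra.
Qed.

Lemma dBfun_k1 (h beta x : R) : 0 < h -> 0 < beta -> 0 < x < 1 ->
  exists w, 0 < w /\ dBfun h beta 1 x = w * (h ^ 2 - (h ^ 2 + 2 * beta ^ 2) * x ^ 2).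
Proof.
  intros hh hb Hx.
  assert (Hb : 0 < sqrt 2 * beta) by (pose proof Rlt_sqrt2_0; nra).
  assert (Hu : 0 < sqrt (1 - x ^ 2)) by (apply sqrt_lt_R0; nra).
  pose proof (pow2_sqrt (1 - x ^ 2) ltac:(nra)) as Hu2.
  unfold dBfun. change (INR 1) with 1. rewrite Nat.sub_diag, pow_O.
  set (u := sqrt (1 - x ^ 2)) in *.
  replace (h ^ 2 - (h ^ 2 + 2 * beta ^ 2) * x ^ 2) with ((h * u) ^ 2 - (sqrt 2 * beta * x) ^ 2)
    by (rewrite !Rpow_mult_distr, pow2_sqrt, Hu2 by lra; ring).
  exists (1 / (u * (h * u + sqrt 2 * beta * x))). split.
  - apply Rdiv_lt_0_compat; [lra|]. apply Rmult_lt_0_compat; nra.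
  - field. split; nra.
Qed.

Lemma Bfun_k1_at_argmax (h beta : R) : 0 < h -> 0 < beta ->
  Bfun h beta 1 (h / sqrt (h ^ 2 + 2 * beta ^ 2)) = sqrt (h ^ 2 + 2 * beta ^ 2).
Proof.
  intros hh hb. pose proof Rlt_sqrt2_0.
  assert (HS : 0 < sqrt (h ^ 2 + 2 * beta ^ 2)) by (apply sqrt_lt_R0; nra).
  pose proof (pow2_sqrt (h ^ 2 + 2 * beta ^ 2) ltac:(nra)) as HS2.
  set (S := sqrt (h ^ 2 + 2 * beta ^ 2)) in *. unfold Bfun.
  replace (1 - (h / S) ^ 2) with ((sqrt 2 * beta / S) ^ 2).
  - rewrite sqrt_pow2 by (apply Rlt_le, Rdiv_lt_0_compat; nra).
    replace (h * (h / S) ^ 1 + sqrt 2 * beta * (sqrt 2 * beta / S))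
      with ((h ^ 2 + sqrt 2 ^ 2 * beta ^ 2) / S) by (field; lra).
    rewrite pow2_sqrt, <- HS2 by lra. field. lra.
  - replace ((sqrt 2 * beta / S) ^ 2) with (sqrt 2 ^ 2 * beta ^ 2 / S ^ 2) by (field; lra).
    replace (1 - (h / S) ^ 2) with ((S ^ 2 - h ^ 2) / S ^ 2) by (field; lra).
    rewrite HS2, pow2_sqrt by lra. field. nra.
Qed.

Lemma Bfun_classification_k1 (h beta : R) : 0 < h -> 0 < beta ->
  sup_on_I (Bfun h beta 1) (sqrt (h ^ 2 + 2 * beta ^ 2)) /\
  (forall a, is_local_max (Bfun h beta 1) a <-> a = h / sqrt (h ^ 2 + 2 * beta ^ 2)) /\
  (forall a, is_global_max (Bfun h beta 1) a <-> a = h / sqrt (h ^ 2 + 2 * beta ^ 2)).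
Proof.
  intros hh hb. set (S := sqrt (h ^ 2 + 2 * beta ^ 2)).
  assert (HS : 0 < S) by (apply sqrt_lt_R0; nra).
  assert (HS2 : S ^ 2 = h ^ 2 + 2 * beta ^ 2) by (apply pow2_sqrt; nra).
  assert (Hm : 0 < h / S < 1).
  { split; [apply Rdiv_lt_0_compat; lra|]. rewrite <- Rdiv_lt_1 by lra. nra. }
  assert (Hinc : strict_incr_on (Bfun h beta 1) 0 (h / S)).
  { apply Bfun_strict_incr_on; [lra | lra|]. intros x Hx.
    destruct (dBfun_k1 h beta x hh hb ltac:(lra)) as [w [Hw ->]].
    destruct Hx as [Hx0 Hx]. rewrite <- Rlt_div_r in Hx by lra.
    assert (0 < x * S) by nra. assert (S ^ 2 * x ^ 2 < h ^ 2) by nra. rewrite <- HS2. nra. }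
  assert (Hdec : strict_decr_on (Bfun h beta 1) (h / S) 1).
  { apply Bfun_strict_decr_on; [lra | lra|]. intros x Hx.
    destruct (dBfun_k1 h beta x hh hb ltac:(lra)) as [w [Hw ->]].
    destruct Hx as [Hx Hx1]. rewrite Rlt_div_l in Hx by lra.
    assert (h ^ 2 < S ^ 2 * x ^ 2) by nra. rewrite <- HS2. nra. }
  destruct (max_classification_incr_neg (Bfun h beta 1) (h / S)) as [Hl Hg]; auto; try lra.
  - intros y _. apply Bfun_le_abs. lra.
  - apply Bfun_strict_incr_on_neg_odd; [lra | lra|]. exists 0%nat. reflexivity.
  - split; [|split; assumption].
    pose proof (Bfun_k1_at_argmax h beta hh hb) as Hval. fold S in Hval.
    rewrite <- Hval. apply sup_on_I_global_max, Hg. reflexivity.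
Qed.

Lemma crit_level_k2 (h beta : R) : 0 < h -> crit_level h beta 0 = beta ^ 2 / (2 * h ^ 2).
Proof. intros hh. unfold crit_level. simpl INR. field. lra. Qed.

Lemma Bfun_k2_at_argmax (h beta : R) : 0 < h -> 0 < beta -> beta < beta_c2 h ->
  Bfun h beta 2 (sqrt (1 - beta ^ 2 / (2 * h ^ 2))) = h + beta ^ 2 / (2 * h).
Proof.
  intros hh hb Hb. unfold beta_c2 in Hb. pose proof Rlt_sqrt2_0.
  assert (Hc : beta ^ 2 / (2 * h ^ 2) = (beta / (sqrt 2 * h)) ^ 2).
  { replace ((beta / (sqrt 2 * h)) ^ 2) with (beta ^ 2 / (sqrt 2 ^ 2 * h ^ 2)) by (field; lra).
    rewrite pow2_sqrt by lra. reflexivity. }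
  assert (Hq : 0 < beta / (sqrt 2 * h) < 1)
    by (split; [apply Rdiv_lt_0_compat | rewrite <- Rdiv_lt_1]; nra).
  assert (Hlt1 : (beta / (sqrt 2 * h)) ^ 2 < 1) by nra.
  unfold Bfun. rewrite pow2_sqrt, Hc by lra.
  replace (1 - (1 - (beta / (sqrt 2 * h)) ^ 2)) with ((beta / (sqrt 2 * h)) ^ 2) by ring.
  rewrite sqrt_pow2 by lra.
  replace (sqrt 2 * beta * (beta / (sqrt 2 * h))) with (beta ^ 2 / h) by (field; lra).
  rewrite <- Hc. field. lra.
Qed.

Lemma Bfun_classification_k2_small (h beta : R) : 0 < h -> 0 < beta -> beta < beta_c2 h ->
  sup_on_I (Bfun h beta 2) (h + beta ^ 2 / (2 * h)) /\
  (forall a, is_local_max (Bfun h beta 2) a <->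
     a = sqrt (1 - beta ^ 2 / (2 * h ^ 2)) \/ a = - sqrt (1 - beta ^ 2 / (2 * h ^ 2))) /\
  (forall a, is_global_max (Bfun h beta 2) a <->
     a = sqrt (1 - beta ^ 2 / (2 * h ^ 2)) \/ a = - sqrt (1 - beta ^ 2 / (2 * h ^ 2))).
Proof.
  intros hh hb Hb. pose proof Rlt_sqrt2_0.
  assert (Hc : 0 < beta ^ 2 / (2 * h ^ 2) < 1).
  { rewrite <- crit_level_k2, <- (crit_level_beta_c2 h) by lra.
    split; [apply crit_level_pos; lra|]. apply crit_level_lt_iff; unfold beta_c2 in *; nra. }
  set (c := beta ^ 2 / (2 * h ^ 2)) in *. set (mx := sqrt (1 - c)).
  assert (Hmx2 : mx ^ 2 = 1 - c) by (apply pow2_sqrt; lra).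
  assert (Hmx : 0 < mx < 1).
  { split; [apply sqrt_lt_R0 | apply sqrt_lt_one]; lra. }
  assert (Hpoly : forall s, crit_poly 0 s = 1 - s) by (intros s; unfold crit_poly; ring).
  assert (Hinc : strict_incr_on (Bfun h beta (0 + 2)) 0 mx).
  { apply Bfun_strict_incr_on_crit; try lra. intros s Hs.
    rewrite Hpoly, crit_level_k2 by lra. fold c. lra. }
  assert (Hdec : strict_decr_on (Bfun h beta (0 + 2)) mx 1).
  { apply Bfun_strict_decr_on_crit; try lra. intros s Hs.
    rewrite Hpoly, crit_level_k2 by lra. fold c. lra. }
  destruct (max_classification_even (Bfun h beta 2) mx) as [Hl Hg]; auto; try lra.
  { intros y. apply Bfun_even. exists 1%nat. reflexivity. }
  split; [|split; assumption].
  rewrite <- (Bfun_k2_at_argmax h beta hh hb Hb). apply sup_on_I_global_max, Hg. now left.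
Qed.

Lemma crit_poly_roots (c : R) (m : nat) : (1 <= m)%nat -> 0 < c < crit_poly m (crit_peak m) ->
  exists s1 s2, 0 < s1 < crit_peak m /\ crit_peak m < s2 < 1 /\
    crit_poly m s1 = c /\ crit_poly m s2 = c.
Proof.
  intros Hm Hc. pose proof (crit_peak_bounds m) as Hpk.
  assert (H0 : crit_poly m 0 = 0) by (unfold crit_poly; rewrite pow_i by lia; ring).
  assert (H1 : crit_poly m 1 = 0) by (unfold crit_poly; ring).
  assert (Hcont : continuity (crit_poly m)) by (intros s; apply crit_poly_continuous).
  destruct (IVT_gen (crit_poly m) 0 (crit_peak m) c Hcont) as [s1 [Hs1 E1]].
  { rewrite H0, Rmin_left, Rmax_right; lra. }
  destruct (IVT_gen (crit_poly m) (crit_peak m) 1 c Hcont) as [s2 [Hs2 E2]].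
  { rewrite H1, Rmin_right, Rmax_left; lra. }
  rewrite Rmin_left, Rmax_right in Hs1, Hs2 by lra.
  exists s1, s2. repeat split; auto.
  - destruct (Req_dec s1 0) as [-> | ]; lra.
  - destruct (Req_dec s1 (crit_peak m)) as [-> | ]; lra.
  - destruct (Req_dec s2 (crit_peak m)) as [-> | ]; lra.
  - destruct (Req_dec s2 1) as [-> | ]; lra.
Qed.

Section LargeRoot.

Variables (h beta : R) (m : nat) (s2 : R).
Hypotheses (hh : 0 < h) (hb : 0 < beta) (Hm : (1 <= m)%nat)
  (Hs2 : crit_peak m < s2 < 1) (Hroot2 : crit_poly m s2 = crit_level h beta m).

Local Notation B := (Bfun h beta (m + 2)).

Lemma sqrt_root2_bounds : 0 < sqrt s2 < 1.
Proof. pose proof (crit_peak_bounds m). split; [apply sqrt_lt_R0 | apply sqrt_lt_one]; lra. Qed.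

Lemma crit_eq_root2 : crit_eq h beta (m + 2) (sqrt s2).
Proof.
  pose proof (crit_peak_bounds m). apply crit_eq_iff. rewrite pow2_sqrt by lra. exact Hroot2.
Qed.

Lemma crit_eq_le_root2 a : crit_eq h beta (m + 2) a -> a <= sqrt s2.
Proof.
  rewrite crit_eq_iff. intros Ha. pose proof sqrt_root2_bounds. pose proof (crit_peak_bounds m).
  pose proof (crit_level_pos h beta m hh hb).
  destruct (Rle_lt_dec a (sqrt s2)) as [| Hgt]; [assumption|]. exfalso.
  assert (Hs : s2 < a ^ 2) by (rewrite <- (pow2_sqrt s2) by lra; nra).
  destruct (Rlt_le_dec (a ^ 2) 1).
  - assert (crit_poly m (a ^ 2) < crit_poly m s2) by (apply crit_poly_strict_decr; lra). lra.
  - assert (crit_poly m (a ^ 2) <= 0).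
    { unfold crit_poly. assert (0 <= (a ^ 2) ^ m) by (apply pow_le; nra). nra. }
    lra.
Qed.

Lemma crit_eq_root2_unique a :
  sqrt (crit_peak m) < a < 1 -> crit_eq h beta (m + 2) a -> a = sqrt s2.
Proof.
  rewrite crit_eq_iff. intros Ha Heq. pose proof (crit_peak_bounds m).
  pose proof (sqrt_pos (crit_peak m)).
  assert (Ha2 : crit_peak m < a ^ 2 < 1).
  { rewrite <- (pow2_sqrt (crit_peak m)) by lra. split; nra. }
  rewrite <- (sqrt_pow2 a) by lra. f_equal.
  apply (strict_decr_on_inj (crit_poly m) (crit_peak m) 1); [apply crit_poly_strict_decr | lra | lra|].
  congruence.
Qed.

Lemma Bfun_root2_gap :
  B (sqrt s2) - B 0 =
  h * sqrt s2 ^ m * (1 - sqrt (1 - s2)) * (1 - (INR m + 1) * sqrt (1 - s2)).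
Proof.
  pose proof sqrt_root2_bounds. pose proof (crit_peak_bounds m). pose proof Rlt_sqrt2_0.
  assert (Hk : 0 < INR (m + 2)) by (rewrite INR_add2; pose proof (pos_INR m); lra).
  pose proof (pow2_sqrt s2 ltac:(lra)) as Hr2. pose proof (pow2_sqrt (1 - s2) ltac:(lra)) as Hu2.
  assert (Hu : 0 <= sqrt (1 - s2)) by apply sqrt_pos.
  set (r := sqrt s2) in *. set (u := sqrt (1 - s2)) in *.
  assert (Hrm : 0 < r ^ m) by (apply pow_lt; lra).
  assert (Hcrit : h * INR (m + 2) * r ^ m * u = sqrt 2 * beta).
  { assert (Hsq : (h * INR (m + 2) * r ^ m * u) ^ 2 = (sqrt 2 * beta) ^ 2).
    { replace ((h * INR (m + 2) * r ^ m * u) ^ 2)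
        with ((h * INR (m + 2)) ^ 2 * ((r ^ 2) ^ m * u ^ 2))
        by (rewrite <- pow_mult, Nat.mul_comm, pow_mult; ring).
      rewrite Hr2, Hu2. fold (crit_poly m s2). rewrite Hroot2, crit_level_sq by lra.
      field. lra. }
    assert (0 <= h * INR (m + 2) * r ^ m * u)
      by (apply Rmult_le_pos; [apply Rmult_le_pos; [nra | lra] | lra]).
    rewrite <- (sqrt_pow2 (h * INR (m + 2) * r ^ m * u)), Hsq, sqrt_pow2 by nra. reflexivity. }
  unfold Bfun. rewrite pow_i by lia. replace (1 - 0 ^ 2) with 1 by ring.
  rewrite sqrt_1, <- Hcrit, pow_add, Hr2, INR_add2. fold u.
  replace s2 with (1 - u ^ 2) by lra. ring.
Qed.

Lemma Bfun_root2_vs_0 :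
  (B 0 < B (sqrt s2) <-> crit_tie m < s2) /\ (B (sqrt s2) < B 0 <-> s2 < crit_tie m).
Proof.
  pose proof Bfun_root2_gap as Hgap. pose proof sqrt_root2_bounds. pose proof (crit_peak_bounds m).
  pose proof (pow2_sqrt (1 - s2) ltac:(lra)) as Hu2.
  assert (Hu : 0 < sqrt (1 - s2) < 1).
  { split; [apply sqrt_lt_R0 | apply sqrt_lt_one]; lra. }
  set (u := sqrt (1 - s2)) in *. set (M := INR m + 1) in *.
  assert (HM : 1 < M) by (apply le_INR in Hm; simpl in Hm; unfold M; lra).
  assert (Hpos : 0 < h * sqrt s2 ^ m * (1 - u))
    by (apply Rmult_lt_0_compat; [apply Rmult_lt_0_compat, pow_lt|]; lra).
  assert (Htie : crit_tie m < s2 <-> (M * u) ^ 2 < 1).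
  { unfold crit_tie. fold M. rewrite Rpow_mult_distr, Hu2.
    rewrite Rmult_comm, Rlt_div_r by (apply pow_lt; lra). lra. }
  assert (Htie' : s2 < crit_tie m <-> 1 < (M * u) ^ 2).
  { unfold crit_tie. fold M. rewrite Rpow_mult_distr, Hu2.
    rewrite Rmult_comm, <- Rlt_div_l by (apply pow_lt; lra). lra. }
  rewrite Htie, Htie', <- (pow1 2), <- !lt_iff_sq_lt by nra. split; split; intros; nra.
Qed.

Lemma root2_vs_tie :
  (crit_tie m < s2 <-> beta < beta_c (m + 2) h) /\ (s2 < crit_tie m <-> beta_c (m + 2) h < beta).
Proof.
  pose proof (crit_tie_bounds m Hm). pose proof (beta_c_pos h m hh Hm).
  rewrite <- (crit_level_lt_iff h beta (beta_c (m + 2) h) m),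
    <- (crit_level_lt_iff h (beta_c (m + 2) h) beta m) by lra.
  rewrite crit_level_beta_c, <- Hroot2 by assumption.
  split; symmetry; (apply (strict_decr_on_lt_iff _ (crit_peak m) 1);
    [apply crit_poly_strict_decr | lra | lra]).
Qed.

End LargeRoot.

Section TwoRoots.

Variables (h beta : R) (m : nat) (s1 s2 : R).
Hypotheses (hh : 0 < h) (hb : 0 < beta) (Hm : (1 <= m)%nat)
  (Hs1 : 0 < s1 < crit_peak m) (Hs2 : crit_peak m < s2 < 1)
  (Hroot1 : crit_poly m s1 = crit_level h beta m)
  (Hroot2 : crit_poly m s2 = crit_level h beta m).

Local Notation B := (Bfun h beta (m + 2)).

Lemma sqrt_roots_bounds : 0 < sqrt s1 < sqrt s2 /\ sqrt s2 < 1.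
Proof.
  pose proof (crit_peak_bounds m).
  split; [split|]; [apply sqrt_lt_R0 | apply sqrt_lt_1_alt | apply sqrt_lt_one]; lra.
Qed.

Lemma Bfun_decr_below_root1 : strict_decr_on B 0 (sqrt s1).
Proof.
  apply Bfun_strict_decr_on_crit; auto; [lra | pose proof sqrt_roots_bounds; lra|].
  rewrite pow2_sqrt by lra. intros s Hs. rewrite <- Hroot1.
  apply crit_poly_strict_incr; lra.
Qed.

Lemma Bfun_incr_between_roots : strict_incr_on B (sqrt s1) (sqrt s2).
Proof.
  pose proof sqrt_roots_bounds.
  apply Bfun_strict_incr_on_crit; auto; [lra | lra|].
  rewrite !pow2_sqrt by lra. intros s Hs.
  destruct (Rle_lt_dec s (crit_peak m)).
  - rewrite <- Hroot1. apply crit_poly_strict_incr; lra.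
  - rewrite <- Hroot2. apply crit_poly_strict_decr; lra.
Qed.

Lemma Bfun_decr_above_root2 : strict_decr_on B (sqrt s2) 1.
Proof.
  pose proof sqrt_roots_bounds.
  apply Bfun_strict_decr_on_crit; auto; [lra | lra|].
  rewrite pow2_sqrt by lra. intros s Hs. rewrite <- Hroot2.
  apply crit_poly_strict_decr; lra.
Qed.

Lemma Bfun_lt_candidates a : 0 <= a <= 1 -> a <> 0 -> a <> sqrt s2 ->
  B a < Rmax (B 0) (B (sqrt s2)).
Proof.
  intros Ha Ha0 Ha2. pose proof sqrt_roots_bounds.
  destruct (Rle_lt_dec a (sqrt s1)).
  - apply Rlt_le_trans with (B 0); [apply Bfun_decr_below_root1; lra | apply Rmax_l].
  - apply Rlt_le_trans with (B (sqrt s2)); [|apply Rmax_r].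
    destruct (Rtotal_order a (sqrt s2)) as [Hlt | [Heq | Hgt]]; [| easy |].
    + apply Bfun_incr_between_roots; lra.
    + apply Bfun_decr_above_root2; lra.
Qed.

Lemma Bfun_le_candidates y : inI y -> B y <= Rmax (B 0) (B (sqrt s2)).
Proof.
  intros Hy. apply Rle_trans with (B (Rabs y)); [apply Bfun_le_abs; lra|].
  destruct (Req_dec (Rabs y) 0) as [-> | H0]; [apply Rmax_l|].
  destruct (Req_dec (Rabs y) (sqrt s2)) as [-> | H2]; [apply Rmax_r|].
  left. apply Bfun_lt_candidates; auto.
  unfold inI in Hy. pose proof (Rabs_pos y). apply Rabs_le in Hy. lra.
Qed.

Lemma Bfun_local_max_nonneg a : 0 <= a <= 1 -> (is_local_max B a <-> a = 0 \/ a = sqrt s2).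
Proof.
  intros Ha. pose proof sqrt_roots_bounds.
  pose proof Bfun_decr_below_root1. pose proof Bfun_incr_between_roots.
  pose proof Bfun_decr_above_root2. split.
  - intros Hl. destruct (Req_dec a 0) as [| Ha0]; [now left|].
    destruct (Req_dec a (sqrt s2)) as [| Ha2]; [now right|]. exfalso.
    destruct (Rle_lt_dec a (sqrt s1)).
    + apply (not_local_max_decr_left B 0 (sqrt s1) a); auto; lra.
    + destruct (Rtotal_order a (sqrt s2)) as [Hlt | [Heq | Hgt]]; [| easy |].
      * apply (not_local_max_incr_right B (sqrt s1) (sqrt s2) a); auto; lra.
      * apply (not_local_max_decr_left B (sqrt s2) 1 a); auto; lra.
  - intros [-> | ->].
    + apply (local_max_0_abs B (sqrt s1)); auto; [|lra].
      intros y _. apply Bfun_le_abs. lra.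
    + apply (local_max_peak B (sqrt s1)); auto; [unfold inI|]; lra.
Qed.

Lemma Bfun_global_max_nonneg a : 0 <= a <= 1 ->
  (is_global_max B a <->
   (a = 0 /\ B (sqrt s2) <= B 0) \/ (a = sqrt s2 /\ B 0 <= B (sqrt s2))).
Proof.
  intros Ha. pose proof sqrt_roots_bounds.
  apply global_max_two_candidates; [unfold inI; lra | unfold inI; lra | |].
  - apply Bfun_le_candidates.
  - apply Bfun_lt_candidates, Ha.
Qed.

Lemma Bfun_global_max_nonneg_gt_beta_c a : beta_c (m + 2) h < beta -> 0 <= a <= 1 ->
  (is_global_max B a <-> a = 0).
Proof.
  intros Hbc Ha. rewrite Bfun_global_max_nonneg by exact Ha.
  destruct (Bfun_root2_vs_0 h beta m s2) as [_ Hlt]; auto.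
  destruct (root2_vs_tie h beta m s2) as [_ Htie]; auto.
  assert (B (sqrt s2) < B 0) by (apply Hlt, Htie, Hbc).
  split; [intros [[] | []]; [auto | lra] | intros ->; left; split; lra].
Qed.

Lemma Bfun_global_max_nonneg_lt_beta_c a : beta < beta_c (m + 2) h -> 0 <= a <= 1 ->
  (is_global_max B a <-> a = sqrt s2).
Proof.
  intros Hbc Ha. rewrite Bfun_global_max_nonneg by exact Ha.
  destruct (Bfun_root2_vs_0 h beta m s2) as [Hgt _]; auto.
  destruct (root2_vs_tie h beta m s2) as [Htie _]; auto.
  assert (B 0 < B (sqrt s2)) by (apply Hgt, Htie, Hbc).
  split; [intros [[] | []]; [lra | auto] | intros ->; right; split; lra].
Qed.

Lemma Bfun_global_max_nonneg_eq_beta_c a : beta = beta_c (m + 2) h -> 0 <= a <= 1 ->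
  (is_global_max B a <-> a = 0 \/ a = sqrt s2).
Proof.
  intros Hbc Ha. rewrite Bfun_global_max_nonneg by exact Ha.
  destruct (Bfun_root2_vs_0 h beta m s2) as [Hgt Hlt]; auto.
  destruct (root2_vs_tie h beta m s2) as [Htie_gt Htie_lt]; auto.
  assert (B (sqrt s2) = B 0).
  { destruct (Rtotal_order (B (sqrt s2)) (B 0)) as [H | [H | H]];
      [apply Hlt, Htie_lt in H | exact H | apply Hgt, Htie_gt in H]; lra. }
  split; [intros [[] | []]; auto | intros [-> | ->]; [left | right]; split; lra].
Qed.

Lemma Bfun_local_max_neg_even a : Nat.Even (m + 2) -> -1 <= a < 0 ->
  is_local_max B a -> a = - sqrt s2.
Proof.
  intros Heven Ha Hl. apply (local_max_opp _ _ (fun y => Bfun_even h beta _ y Heven)) in Hl.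
  apply Bfun_local_max_nonneg in Hl; lra.
Qed.

End TwoRoots.

Lemma Bfun_classification_small_beta (h beta : R) (m : nat) :
  0 < h -> 0 < beta -> (1 <= m)%nat -> beta < beta_tc (m + 2) h ->
  let k := (m + 2)%nat in
  exists ahat,
    crit_eq h beta k ahat /\
    (forall a, crit_eq h beta k a -> a <= ahat) /\
    sqrt ((INR k - 2) / (INR k - 1)) < ahat < 1 /\
    (forall a, sqrt ((INR k - 2) / (INR k - 1)) < a < 1 -> crit_eq h beta k a -> a = ahat) /\
    (forall a, 0 <= a <= 1 -> (is_local_max (Bfun h beta k) a <-> a = 0 \/ a = ahat)) /\
    (beta_c k h < beta ->
       forall a, 0 <= a <= 1 -> (is_global_max (Bfun h beta k) a <-> a = 0)) /\
    (beta = beta_c k h ->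
       forall a, 0 <= a <= 1 -> (is_global_max (Bfun h beta k) a <-> a = 0 \/ a = ahat)) /\
    (beta < beta_c k h ->
       forall a, 0 <= a <= 1 -> (is_global_max (Bfun h beta k) a <-> a = ahat)) /\
    ((4 <= k)%nat -> Nat.Even k ->
       (is_local_max (Bfun h beta k) ahat -> is_local_max (Bfun h beta k) (- ahat)) /\
       (is_global_max (Bfun h beta k) ahat -> is_global_max (Bfun h beta k) (- ahat)) /\
       (forall a, -1 <= a < 0 -> is_local_max (Bfun h beta k) a -> a = - ahat) /\
       (forall a, -1 <= a < 0 -> is_global_max (Bfun h beta k) a -> a = - ahat)).
Proof.
  intros hh hb Hm Hb k. subst k.
  assert (Hc : 0 < crit_level h beta m < crit_poly m (crit_peak m)).
  { split; [apply crit_level_pos; auto|]. rewrite <- (crit_level_beta_tc h m) by assumption.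
    apply crit_level_lt_iff; auto. apply beta_tc_pos, hh. }
  destruct (crit_poly_roots _ m Hm Hc) as [s1 [s2 [Hs1 [Hs2 [Hroot1 Hroot2]]]]].
  assert (Hpeak : (INR (m + 2) - 2) / (INR (m + 2) - 1) = crit_peak m).
  { unfold crit_peak. rewrite INR_add2. f_equal; ring. }
  rewrite Hpeak. exists (sqrt s2).
  assert (Hsym : forall y, Nat.Even (m + 2) -> Bfun h beta (m + 2) (- y) = Bfun h beta (m + 2) y)
    by (intros y; apply Bfun_even).
  split; [|split; [|split; [|split; [|split; [|split; [|split; [|split]]]]]]].
  - apply crit_eq_root2; assumption.
  - apply crit_eq_le_root2; assumption.
  - split; [apply sqrt_lt_1_alt; pose proof (crit_peak_bounds m); lra|].
    apply (sqrt_root2_bounds m s2 Hs2).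
  - intros a Ha. apply crit_eq_root2_unique; assumption.
  - apply (Bfun_local_max_nonneg h beta m s1 s2); assumption.
  - intros Hbc a. apply (Bfun_global_max_nonneg_gt_beta_c h beta m s1 s2); assumption.
  - intros Hbc a. apply (Bfun_global_max_nonneg_eq_beta_c h beta m s1 s2); assumption.
  - intros Hbc a. apply (Bfun_global_max_nonneg_lt_beta_c h beta m s1 s2); assumption.
  - intros _ Heven. split; [|split; [|split]].
    + apply local_max_opp. intros y. apply Hsym, Heven.
    + apply global_max_opp. intros y. apply Hsym, Heven.
    + intros a. apply (Bfun_local_max_neg_even h beta m s1 s2); assumption.
    + intros a Ha Hg. apply (Bfun_local_max_neg_even h beta m s1 s2); try assumption.
      apply global_max_local_max, Hg.
Qed.

Theorem lemma5p1 (h beta : R) (k : nat) (hh : 0 < h) (hb : 0 < beta) :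
  (* k = 1 *)
  (k = 1%nat ->
     sup_on_I (Bfun h beta k) (sqrt (h ^ 2 + 2 * beta ^ 2)) /\
     (forall a, is_local_max (Bfun h beta k) a <-> a = h / sqrt (h ^ 2 + 2 * beta ^ 2)) /\
     (forall a, is_global_max (Bfun h beta k) a <-> a = h / sqrt (h ^ 2 + 2 * beta ^ 2)))
  /\
  (* k = 2, beta >= beta_c(2,h) *)
  (k = 2%nat -> beta_c2 h <= beta ->
     (forall a, is_local_max (Bfun h beta k) a <-> a = 0) /\
     (forall a, is_global_max (Bfun h beta k) a <-> a = 0))
  /\
  (* k = 2, beta < beta_c(2,h) *)
  (k = 2%nat -> beta < beta_c2 h ->
     sup_on_I (Bfun h beta k) (h + beta ^ 2 / (2 * h)) /\
     (forall a, is_local_max (Bfun h beta k) a <->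
        a = sqrt (1 - beta ^ 2 / (2 * h ^ 2)) \/ a = - sqrt (1 - beta ^ 2 / (2 * h ^ 2))) /\
     (forall a, is_global_max (Bfun h beta k) a <->
        a = sqrt (1 - beta ^ 2 / (2 * h ^ 2)) \/ a = - sqrt (1 - beta ^ 2 / (2 * h ^ 2))))
  /\
  (* k >= 3, beta >= tilde beta_c(k,h) *)
  ((3 <= k)%nat -> beta_tc k h <= beta ->
     (forall a, is_local_max (Bfun h beta k) a <-> a = 0) /\
     (forall a, is_global_max (Bfun h beta k) a <-> a = 0))
  /\
  (* k >= 3, beta < tilde beta_c(k,h) *)
  ((3 <= k)%nat -> beta < beta_tc k h ->
     exists ahat,
       (* ahat is the largest real solution of the equation ... *)
       crit_eq h beta k ahat /\
       (forall a, crit_eq h beta k a -> a <= ahat) /\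
       (* ... and the unique solution in (sqrt((k-2)/(k-1)), 1) *)
       sqrt ((INR k - 2) / (INR k - 1)) < ahat < 1 /\
       (forall a, sqrt ((INR k - 2) / (INR k - 1)) < a < 1 -> crit_eq h beta k a -> a = ahat) /\
       (* local maximizers in [0,1] are exactly 0 and ahat *)
       (forall a, 0 <= a <= 1 -> (is_local_max (Bfun h beta k) a <-> a = 0 \/ a = ahat)) /\
       (* global maximizers in [0,1] *)
       (beta_c k h < beta ->
          forall a, 0 <= a <= 1 -> (is_global_max (Bfun h beta k) a <-> a = 0)) /\
       (beta = beta_c k h ->
          forall a, 0 <= a <= 1 -> (is_global_max (Bfun h beta k) a <-> a = 0 \/ a = ahat)) /\
       (beta < beta_c k h ->
          forall a, 0 <= a <= 1 -> (is_global_max (Bfun h beta k) a <-> a = ahat)) /\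
       (* k >= 4 even: -ahat mirrors ahat, and is the only such point in [-1,0) *)
       ((4 <= k)%nat -> Nat.Even k ->
          (is_local_max (Bfun h beta k) ahat -> is_local_max (Bfun h beta k) (- ahat)) /\
          (is_global_max (Bfun h beta k) ahat -> is_global_max (Bfun h beta k) (- ahat)) /\
          (forall a, -1 <= a < 0 -> is_local_max (Bfun h beta k) a -> a = - ahat) /\
          (forall a, -1 <= a < 0 -> is_global_max (Bfun h beta k) a -> a = - ahat)))
  /\
  (* k >= 3 odd: no local maximizers in [-1,0) *)
  ((3 <= k)%nat -> Nat.Odd k ->
     forall a, -1 <= a < 0 -> ~ is_local_max (Bfun h beta k) a).
Proof.
  split; [intros ->; apply Bfun_classification_k1; assumption|].
  split.
  { intros -> Hb. apply (Bfun_decreasing_regime h beta 0); [assumption | assumption|].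
    rewrite crit_poly_peak0, <- (crit_level_beta_c2 h) by assumption.
    apply crit_level_le; [assumption | unfold beta_c2; pose proof Rlt_sqrt2_0; nra | assumption]. }
  split; [intros ->; apply Bfun_classification_k2_small; assumption|].
  split.
  { intros Hk Hb. destruct (Nat.le_exists_sub 2 k) as [m [-> _]]; [lia|].
    apply Bfun_decreasing_regime; [assumption | assumption|].
    rewrite <- (crit_level_beta_tc h m) by (assumption || lia).
    apply crit_level_le; [assumption | apply beta_tc_pos | ]; assumption. }
  split.
  { intros Hk Hb. destruct (Nat.le_exists_sub 2 k) as [m [-> _]]; [lia|].
    apply Bfun_classification_small_beta; (assumption || lia). }
  intros _ Hodd a Ha. apply (not_local_max_incr_right _ (-1) 0 a); [|lra | lra].
  apply Bfun_strict_incr_on_neg_odd; [lra | assumption | assumption].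
Qed.
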